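(* Let $e$ be as in the context, and let $\mu:\Pi_0\to\Pi_0$ be its monodromy. Then $\mu$ is an orientation-preserving isometry of the plane $\Pi_0$. Its linear part is the rotation through the angle $\int_0^L k_e(s)\,ds$, the total curvature of $e$, measured in the direction from $\mathbf{n}_e(0)$ towards $\mathbf{t}_e(0)$.
   Context: $e:\mathbb{R}\to\mathbb{R}^3$ is a smooth closed curve, $L$-periodic and parametrized by arclength $s$. Its curvature is $k_e>0$ and its torsion $\tau_e\neq0$ everywhere. Its Frenet frame is $(\mathbf{t}_e,\mathbf{n}_e,\mathbf{b}_e)$, with $\mathbf{t}_e'=k_e\mathbf{n}_e$, $\mathbf{n}_e'=-k_e\mathbf{t}_e+\tau_e\mathbf{b}_e$, $\mathbf{b}_e'=-\tau_e\mathbf{n}_e$. Let $\Pi_s=e(s)+\operatorname{span}(\mathbf{t}_e(s),\mathbf{n}_e(s))$ be the osculating plane at $e(s)$; note $\Pi_L=\Pi_0$. For $p\in\Pi_0$, the involute through $p$ is the unique smooth curve $\xi_p:[0,L]\to\mathbb{R}^3$ with $\xi_p(0)=p$, $\xi_p(s)\in\Pi_s$ and $\xi_p'(s)$ parallel to $\mathbf{b}_e(s)$ for all $s$. The monodromy is the map $\mu:\Pi_0\to\Pi_0$, $\mu(p)=\xi_p(L)$. *)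

From Stdlib Require Import Reals.
From Coquelicot Require Import Coquelicot.
Open Scope R_scope.

Definition V3 : Type := (R * R * R)%type.
Definition mkV (a b c : R) : V3 := (a, b, c).
Definition vx (v : V3) : R := fst (fst v).
Definition vy (v : V3) : R := snd (fst v).
Definition vz (v : V3) : R := snd v.

Definition vadd (u v : V3) : V3 := mkV (vx u + vx v) (vy u + vy v) (vz u + vz v).
Definition vscal (a : R) (v : V3) : V3 := mkV (a * vx v) (a * vy v) (a * vz v).
Definition vsub (u v : V3) : V3 := vadd u (vscal (-1) v).
Definition dot (u v : V3) : R := vx u * vx v + vy u * vy v + vz u * vz v.
Definition cross (u v : V3) : V3 :=
  mkV (vy u * vz v - vz u * vy v)
      (vz u * vx v - vx u * vz v)
      (vx u * vy v - vy u * vx v).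

Definition vderiv (f : R -> V3) (s : R) (d : V3) : Prop :=
  is_derive (fun u => vx (f u)) s (vx d) /\
  is_derive (fun u => vy (f u)) s (vy d) /\
  is_derive (fun u => vz (f u)) s (vz d).

Definition vsmooth (f : R -> V3) : Prop :=
  forall (m : nat) (x : R),
    ex_derive_n (fun u => vx (f u)) m x /\
    ex_derive_n (fun u => vy (f u)) m x /\
    ex_derive_n (fun u => vz (f u)) m x.

Definition frenet_closed_curve (L : R) (e : R -> V3) (k tau : R -> R)
  (t n b : R -> V3) : Prop :=
  0 < L /\
  vsmooth e /\
  (forall s, e (s + L) = e s) /\
  (forall s, vderiv e s (t s)) /\
  (forall s, dot (t s) (t s) = 1) /\
  (forall s, dot (n s) (n s) = 1) /\
  (forall s, dot (t s) (n s) = 0) /\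
  (forall s, b s = cross (t s) (n s)) /\
  (forall s, 0 < k s) /\
  (forall s, tau s <> 0) /\
  (forall s, vderiv t s (vscal (k s) (n s))) /\
  (forall s, vderiv n s (vadd (vscal (- k s) (t s)) (vscal (tau s) (b s)))) /\
  (forall s, vderiv b s (vscal (- tau s) (n s))).

Definition in_osc (e : R -> V3) (t n : R -> V3) (s : R) (x : V3) : Prop :=
  exists alpha beta : R, x = vadd (e s) (vadd (vscal alpha (t s)) (vscal beta (n s))).

Definition is_involute (L : R) (e t n b : R -> V3) (p : V3) (xi : R -> V3) : Prop :=
  vsmooth xi /\ xi 0 = p /\
  forall s, 0 <= s <= L ->
    in_osc e t n s (xi s) /\
    exists (lam : R) (d : V3), vderiv xi s d /\ d = vscal lam (b s).

(* Rotation of the direction plane span(t0, n0) through the angle theta,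
   in the direction from n0 towards t0: n0 |-> cos theta n0 + sin theta t0,
   t0 |-> cos theta t0 - sin theta n0. *)
Definition rot (theta : R) (t0 n0 v : V3) : V3 :=
  let x := dot v t0 in
  let y := dot v n0 in
  vadd (vscal (cos theta * x + sin theta * y) t0)
       (vscal (cos theta * y - sin theta * x) n0).

(* Writing an involute as [xi = e + a t + b n], the conditions [xi' // b] and the Frenet
   equations reduce to the planar linear system [a' = k b - 1, b' = - k a].  Rotating [(a, b)]
   through the turning angle [angle k s = int_0^s k] and adding the plane curve with
   curvature [k] gives a conserved quantity, so the system has an explicit solution; it is the
   only one, since two solutions differ by a solution of [u' = k v, v' = - k u], whose norm is
   constant.  As the Frenet frame is [L]-periodic, the value at [L] of the solution starting
   from [p] is [c + rot (angle k L) (p - e 0)]. *)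

From Stdlib Require Import Reals Lra FunctionalExtensionality.
From Coquelicot Require Import Coquelicot.
Open Scope R_scope.

Lemma is_derive_Rplus (f g : R -> R) x df dg :
  is_derive f x df -> is_derive g x dg -> is_derive (fun y => f y + g y) x (df + dg).
Proof. intros; apply (is_derive_plus f g); auto. Qed.

Lemma is_derive_Rminus (f g : R -> R) x df dg :
  is_derive f x df -> is_derive g x dg -> is_derive (fun y => f y - g y) x (df - dg).
Proof. intros; apply (is_derive_minus f g); auto. Qed.

Lemma is_derive_Rmult (f g : R -> R) x df dg :
  is_derive f x df -> is_derive g x dg ->
  is_derive (fun y => f y * g y) x (df * g x + f x * dg).
Proof. intros; apply (is_derive_mult f g); auto; intros; apply Rmult_comm. Qed.

Lemma is_derive_Rcomp (g f : R -> R) x dg df :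
  is_derive g (f x) dg -> is_derive f x df -> is_derive (fun y => g (f y)) x (df * dg).
Proof. intros; apply (is_derive_comp g f); auto. Qed.

Lemma is_derive_eq (f : R -> R) (x d d' : R) : is_derive f x d -> d = d' -> is_derive f x d'.
Proof. intros H <-; exact H. Qed.

Lemma Derive_fun (f g : R -> R) : (forall x : R, is_derive f x (g x)) -> Derive f = g.
Proof.
  intros H; apply functional_extensionality; intros x; apply is_derive_unique, H.
Qed.

Fixpoint Ck (m : nat) (f : R -> R) : Prop :=
  match m with
  | O => True
  | S m' => (forall x, ex_derive f x) /\ Ck m' (Derive f)
  end.

Definition Cinf (f : R -> R) : Prop := forall m, Ck m f.

Lemma Ck_ext m (f g : R -> R) : (forall x, f x = g x) -> Ck m f -> Ck m g.
Proof. intros H; apply functional_extensionality in H; subst; auto. Qed.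

Lemma Ck_pred m f : Ck (S m) f -> Ck m f.
Proof.
  revert f; induction m as [|m IH]; intros f [Hf Hdf]; simpl; auto.
Qed.

Lemma Ck_const m c : Ck m (fun _ => c).
Proof.
  revert c; induction m as [|m IH]; intros c; simpl; auto.
  split; [intros; apply ex_derive_const|].
  rewrite (Derive_fun _ (fun _ => 0)); auto.
  intros x; apply (is_derive_const c).
Qed.

Lemma Ck_plus m f g : Ck m f -> Ck m g -> Ck m (fun x => f x + g x).
Proof.
  revert f g; induction m as [|m IH]; intros f g; simpl; auto.
  intros [Hf Hdf] [Hg Hdg]; split; [intros; apply (ex_derive_plus f g); auto|].
  apply Ck_ext with (fun x => Derive f x + Derive g x); auto.
  intros x; rewrite Derive_plus; auto.
Qed.

Lemma Ck_mult m f g : Ck m f -> Ck m g -> Ck m (fun x => f x * g x).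
Proof.
  revert f g; induction m as [|m IH]; intros f g Hf Hg; simpl; auto.
  pose proof (Ck_pred _ _ Hf) as Hf'; pose proof (Ck_pred _ _ Hg) as Hg'.
  destruct Hf as [Hf Hdf], Hg as [Hg Hdg].
  split; [intros; apply (ex_derive_mult f g); auto|].
  apply Ck_ext with (fun x => Derive f x * g x + f x * Derive g x).
  - intros x; rewrite Derive_mult; auto.
  - apply Ck_plus; apply IH; auto.
Qed.

Lemma Ck_comp m g f : Cinf g -> Ck m f -> Ck m (fun x => g (f x)).
Proof.
  revert g f; induction m as [|m IH]; intros g f Hg Hf; simpl; auto.
  pose proof (Ck_pred _ _ Hf) as Hf'; destruct Hf as [Hf Hdf].
  destruct (Hg 1%nat) as [Hg1 _].
  split; [intros; apply (ex_derive_comp g f); auto|].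
  apply Ck_ext with (fun x => Derive g (f x) * Derive f x).
  - intros x; rewrite (Derive_comp g f x); auto; ring.
  - apply Ck_mult; auto. apply IH; auto. intros n; apply (Hg (S n)).
Qed.

Section Cinf_closure.
Variables f g : R -> R.
Hypotheses (Hf : Cinf f) (Hg : Cinf g).

Lemma Cinf_plus : Cinf (fun x => f x + g x).
Proof. intros m; apply Ck_plus; auto. Qed.

Lemma Cinf_mult : Cinf (fun x => f x * g x).
Proof. intros m; apply Ck_mult; auto. Qed.

Lemma Cinf_comp : Cinf (fun x => f (g x)).
Proof. intros m; apply Ck_comp; auto. Qed.

Lemma Cinf_is_derive x : is_derive f x (Derive f x).
Proof. apply Derive_correct; apply (Hf 1%nat). Qed.

Lemma Cinf_Derive : Cinf (Derive f).
Proof. intros m; apply (Hf (S m)). Qed.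

Lemma Cinf_continuous x : continuous f x.
Proof. apply (ex_derive_continuous f); apply (Hf 1%nat). Qed.

End Cinf_closure.

Lemma Cinf_const c : Cinf (fun _ => c).
Proof. intros m; apply Ck_const. Qed.

Lemma Cinf_ext f g : (forall x, f x = g x) -> Cinf f -> Cinf g.
Proof. intros H Hf m; apply Ck_ext with f; auto. Qed.

Lemma Cinf_derive f g : Cinf f -> (forall x, is_derive f x (g x)) -> Cinf g.
Proof. intros Hf H; rewrite <- (Derive_fun _ _ H); apply Cinf_Derive; auto. Qed.

Lemma Cinf_sin_cos : Cinf sin /\ Cinf cos.
Proof.
  assert (Dsin : Derive sin = cos) by (apply Derive_fun, is_derive_sin).
  assert (Dcos : Derive cos = fun x => -1 * sin x).
  { apply Derive_fun; intros x; apply is_derive_eq with (- sin x); [apply is_derive_cos | simpl; ring]. }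
  assert (H : forall m, Ck m sin /\ Ck m cos).
  { induction m as [|m [Hs Hc]]; simpl; auto.
    repeat split.
    - intros x; eexists; apply is_derive_sin.
    - rewrite Dsin; auto.
    - intros x; eexists; apply is_derive_cos.
    - rewrite Dcos; apply Ck_mult; auto; apply Ck_const. }
  split; intros m; apply H.
Qed.

Section Cinf_positive.
Variable K : R -> R.
Hypotheses (HK : Cinf K) (K_pos : forall x, 0 < K x).

Lemma Cinf_inv : Cinf (fun x => / K x).
Proof.
  assert (K_neq0 : forall x, K x <> 0) by (intros x; apply Rgt_not_eq, K_pos).
  intros m; induction m as [|m IH]; simpl; auto. split.
  - intros x; eexists; apply is_derive_inv; auto; apply Cinf_is_derive, HK.
  - apply Ck_ext with (fun x => -1 * (Derive K x * (/ K x * / K x))).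
    + intros x; symmetry; apply is_derive_unique.
      eapply is_derive_eq; [apply is_derive_inv; auto; apply Cinf_is_derive, HK|].
      cbv beta; field; auto.
    + apply Ck_mult; [apply Ck_const|].
      apply Ck_mult; [apply Cinf_Derive, HK | apply Ck_mult; auto].
Qed.

Lemma Cinf_sqrt : Cinf (fun x => sqrt (K x)).
Proof.
  pose proof Cinf_inv as Hinv.
  intros m; induction m as [|m IH]; simpl; auto. split.
  - intros x; eexists; apply is_derive_sqrt; auto; apply Cinf_is_derive, HK.
  - apply Ck_ext with (fun x => Derive K x * (/ 2 * (sqrt (K x) * / K x))).
    + intros x; symmetry; apply is_derive_unique.
      eapply is_derive_eq; [apply is_derive_sqrt; auto; apply Cinf_is_derive, HK|].
      pose proof (sqrt_lt_R0 _ (K_pos x)) as Hs.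
      pose proof (sqrt_sqrt _ (Rlt_le _ _ (K_pos x))) as Hss.
      cbv beta; rewrite <- Hss at 3; field; lra.
    + apply Ck_mult; [apply Cinf_Derive, HK|].
      apply Ck_mult; [apply Ck_const | apply Ck_mult; auto].
Qed.

End Cinf_positive.

Lemma is_derive_RInt_upper (f : R -> R) s :
  (forall x, continuous f x) -> is_derive (fun x => RInt f 0 x) s (f s).
Proof.
  intros Hf; apply (is_derive_RInt _ _ 0); auto.
  exists (mkposreal 1 Rlt_0_1); intros x _.
  apply RInt_correct, ex_RInt_continuous; auto.
Qed.

Lemma Cinf_antiderivative F f : Cinf f -> (forall x, is_derive F x (f x)) -> Cinf F.
Proof.
  intros Hf HF [|m]; simpl; auto.
  split; [intros x; eexists; apply HF|].
  rewrite (Derive_fun _ _ HF); apply Hf.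
Qed.

Lemma Cinf_RInt f : Cinf f -> Cinf (fun x => RInt f 0 x).
Proof.
  intros Hf; apply Cinf_antiderivative with f; auto.
  intros s; apply is_derive_RInt_upper; intros x; apply Cinf_continuous, Hf.
Qed.

Definition coord (i : nat) (v : V3) : R :=
  match i with O => vx v | 1%nat => vy v | _ => vz v end.

Lemma V3_eq u v : (forall i, coord i u = coord i v) -> u = v.
Proof.
  destruct u as [[u0 u1] u2], v as [[v0 v1] v2]; intros H.
  pose proof (H 0%nat); pose proof (H 1%nat); pose proof (H 2%nat).
  cbv [coord vx vy vz] in *; simpl in *; subst; reflexivity.
Qed.

Lemma coord_vadd i u v : coord i (vadd u v) = coord i u + coord i v.
Proof. destruct i as [|[|]]; reflexivity. Qed.

Lemma coord_vscal i a v : coord i (vscal a v) = a * coord i v.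
Proof. destruct i as [|[|]]; reflexivity. Qed.

Lemma coord_vsub i u v : coord i (vsub u v) = coord i u - coord i v.
Proof. unfold vsub; rewrite coord_vadd, coord_vscal; ring. Qed.

Lemma dot_coord u v :
  dot u v = coord 0 u * coord 0 v + coord 1 u * coord 1 v + coord 2 u * coord 2 v.
Proof. reflexivity. Qed.

Ltac v3_ring :=
  try (apply V3_eq; intros [|[|]]);
  cbv [coord dot cross vsub vadd vscal mkV vx vy vz fst snd]; ring.

Lemma vderiv_coord f s d :
  vderiv f s d <-> forall i, is_derive (fun u => coord i (f u)) s (coord i d).
Proof.
  split.
  - intros (Hx & Hy & Hz) [|[|]]; auto.
  - intros H; split; [|split]; [apply (H 0%nat) | apply (H 1%nat) | apply (H 2%nat)].
Qed.

Lemma Derive_n_Derive f m x : Derive_n (Derive f) m x = Derive_n f (S m) x.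
Proof.
  revert x; induction m as [|m IH]; intros x; simpl; auto.
  f_equal; apply functional_extensionality; intros y; apply IH.
Qed.

Lemma Cinf_ex_derive_n f : Cinf f <-> forall m x, ex_derive_n f m x.
Proof.
  split.
  - intros Hf m; revert f Hf; induction m as [|m IH]; intros f Hf x; simpl; auto.
    destruct m as [|m]; [apply (Hf 1%nat)|].
    eapply ex_derive_ext; [intros y; apply Derive_n_Derive|].
    apply (IH (Derive f)); apply Cinf_Derive, Hf.
  - intros H m; revert f H; induction m as [|m IH]; intros f H; simpl; auto.
    split; [intros x; apply (H 1%nat)|].
    apply IH; intros [|j] x; simpl; auto.
    eapply ex_derive_ext; [intros y; symmetry; apply Derive_n_Derive|].
    apply (H (S (S j))).
Qed.

Lemma vsmooth_coord f : vsmooth f <-> forall i, Cinf (fun u => coord i (f u)).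
Proof.
  split.
  - intros H [|[|]]; apply Cinf_ex_derive_n; intros m x; apply (H m x).
  - intros H m x; split; [|split]; apply Cinf_ex_derive_n;
      [apply (H 0%nat) | apply (H 1%nat) | apply (H 2%nat)].
Qed.

Lemma vderiv_eq f s d d' : vderiv f s d -> d = d' -> vderiv f s d'.
Proof. intros H <-; exact H. Qed.

Section Vector_calculus.
Variables (f g : R -> V3) (s : R) (df dg : V3).
Hypotheses (Hf : vderiv f s df) (Hg : vderiv g s dg).

Lemma vderiv_vadd : vderiv (fun u => vadd (f u) (g u)) s (vadd df dg).
Proof.
  apply vderiv_coord; intros i; rewrite coord_vadd.
  apply is_derive_ext with (fun u => coord i (f u) + coord i (g u)).
  - intros u; symmetry; apply coord_vadd.
  - apply is_derive_Rplus; apply vderiv_coord; auto.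
Qed.

Lemma vderiv_vscal (a : R -> R) (da : R) :
  is_derive a s da ->
  vderiv (fun u => vscal (a u) (f u)) s (vadd (vscal da (f s)) (vscal (a s) df)).
Proof.
  intros Ha; apply vderiv_coord; intros i; rewrite coord_vadd, !coord_vscal.
  apply is_derive_ext with (fun u => a u * coord i (f u)).
  - intros u; symmetry; apply coord_vscal.
  - apply is_derive_Rmult; auto; apply vderiv_coord; auto.
Qed.

Lemma is_derive_dot :
  is_derive (fun u => dot (f u) (g u)) s (dot df (g s) + dot (f s) dg).
Proof.
  pose proof (proj1 (vderiv_coord _ _ _) Hf) as Cf.
  pose proof (proj1 (vderiv_coord _ _ _) Hg) as Cg.
  eapply is_derive_eq.
  - apply is_derive_ext with (fun u => coord 0 (f u) * coord 0 (g u)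
        + coord 1 (f u) * coord 1 (g u) + coord 2 (f u) * coord 2 (g u)); [reflexivity|].
    apply is_derive_Rplus; [apply is_derive_Rplus|]; apply is_derive_Rmult; auto.
  - rewrite !dot_coord; ring.
Qed.

Lemma vderiv_vsub : vderiv (fun u => vsub (f u) (g u)) s (vsub df dg).
Proof.
  apply vderiv_coord; intros i; rewrite coord_vsub.
  apply is_derive_ext with (fun u => coord i (f u) - coord i (g u)).
  - intros u; symmetry; apply coord_vsub.
  - apply is_derive_Rminus; apply vderiv_coord; auto.
Qed.

End Vector_calculus.

Definition angle (k : R -> R) (s : R) : R := RInt k 0 s.

(* [(devx k, devy k)] is the plane curve of curvature [k] parametrized by arclength. *)
Definition devx (k : R -> R) (s : R) : R := RInt (fun u => cos (angle k u)) 0 s.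
Definition devy (k : R -> R) (s : R) : R := RInt (fun u => sin (angle k u)) 0 s.

(* The coordinates along [t] and [n] of the involute through [e 0 + a0 t 0 + b0 n 0]
   (see [frame_involute]). *)
Definition involute_t (k : R -> R) (a0 b0 s : R) : R :=
  cos (angle k s) * (a0 - devx k s) + sin (angle k s) * (b0 - devy k s).
Definition involute_n (k : R -> R) (a0 b0 s : R) : R :=
  cos (angle k s) * (b0 - devy k s) - sin (angle k s) * (a0 - devx k s).

Section Involute_equation.
Variable k : R -> R.
Hypothesis k_smooth : Cinf k.

Lemma Cinf_angle : Cinf (angle k).
Proof. exact (Cinf_RInt _ k_smooth). Qed.

Lemma Cinf_cos_angle : Cinf (fun u => cos (angle k u)).
Proof. apply Cinf_comp; [apply Cinf_sin_cos | exact Cinf_angle]. Qed.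

Lemma Cinf_sin_angle : Cinf (fun u => sin (angle k u)).
Proof. apply Cinf_comp; [apply Cinf_sin_cos | exact Cinf_angle]. Qed.

Lemma is_derive_angle s : is_derive (angle k) s (k s).
Proof. apply (is_derive_RInt_upper k); intros x; apply Cinf_continuous, k_smooth. Qed.

Lemma is_derive_cos_angle s :
  is_derive (fun u => cos (angle k u)) s (- k s * sin (angle k s)).
Proof.
  eapply is_derive_eq; [apply is_derive_Rcomp; [apply is_derive_cos | apply is_derive_angle]|].
  ring.
Qed.

Lemma is_derive_sin_angle s :
  is_derive (fun u => sin (angle k u)) s (k s * cos (angle k s)).
Proof. apply is_derive_Rcomp; [apply is_derive_sin | apply is_derive_angle]. Qed.

Lemma is_derive_devx s : is_derive (devx k) s (cos (angle k s)).
Proof. apply (is_derive_RInt_upper (fun u => cos (angle k u))); intros x; apply Cinf_continuous, Cinf_cos_angle. Qed.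

Lemma is_derive_devy s : is_derive (devy k) s (sin (angle k s)).
Proof. apply (is_derive_RInt_upper (fun u => sin (angle k u))); intros x; apply Cinf_continuous, Cinf_sin_angle. Qed.

Lemma Cinf_involute a0 b0 : Cinf (involute_t k a0 b0) /\ Cinf (involute_n k a0 b0).
Proof.
  assert (Hc := Cinf_cos_angle); assert (Hs := Cinf_sin_angle).
  assert (Hx : Cinf (fun s => a0 - devx k s)).
  { apply Cinf_plus; [apply Cinf_const|].
    apply Cinf_ext with (fun s => -1 * devx k s); [intros; ring|].
    apply Cinf_mult; [apply Cinf_const | exact (Cinf_RInt _ Hc)]. }
  assert (Hy : Cinf (fun s => b0 - devy k s)).
  { apply Cinf_plus; [apply Cinf_const|].
    apply Cinf_ext with (fun s => -1 * devy k s); [intros; ring|].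
    apply Cinf_mult; [apply Cinf_const | exact (Cinf_RInt _ Hs)]. }
  split.
  - apply Cinf_plus; apply Cinf_mult; auto.
  - apply Cinf_ext with (fun s => cos (angle k s) * (b0 - devy k s)
                                 + -1 * (sin (angle k s) * (a0 - devx k s))).
    + intros; unfold involute_n; ring.
    + apply Cinf_plus; [|apply Cinf_mult; [apply Cinf_const|]]; apply Cinf_mult; auto.
Qed.

Lemma involute_ode a0 b0 s :
  is_derive (involute_t k a0 b0) s (k s * involute_n k a0 b0 s - 1) /\
  is_derive (involute_n k a0 b0) s (- k s * involute_t k a0 b0 s).
Proof.
  assert (Hx : is_derive (fun u => a0 - devx k u) s (0 - cos (angle k s))).
  { apply is_derive_Rminus; [apply (is_derive_const a0) | apply is_derive_devx]. }
  assert (Hy : is_derive (fun u => b0 - devy k u) s (0 - sin (angle k s))).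
  { apply is_derive_Rminus; [apply (is_derive_const b0) | apply is_derive_devy]. }
  pose proof (sin2_cos2 (angle k s)) as Hpyth; unfold Rsqr in Hpyth.
  split.
  - eapply is_derive_eq.
    + apply is_derive_Rplus; apply is_derive_Rmult;
        eauto using is_derive_cos_angle, is_derive_sin_angle.
    + unfold involute_n; nra.
  - eapply is_derive_eq.
    + apply is_derive_Rminus; apply is_derive_Rmult;
        eauto using is_derive_cos_angle, is_derive_sin_angle.
    + unfold involute_t; ring.
Qed.

Lemma involute_at_0 a0 b0 : involute_t k a0 b0 0 = a0 /\ involute_n k a0 b0 0 = b0.
Proof.
  unfold involute_t, involute_n, devx, devy, angle; rewrite !RInt_point.
  unfold zero; simpl; rewrite cos_0, sin_0; split; ring.
Qed.

(* Two solutions differ by a solution of [u' = k v, v' = - k u], whose norm is constant. *)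
Lemma involute_ode_unique L a c :
  0 < L ->
  (forall s, 0 <= s <= L -> is_derive a s (k s * c s - 1) /\ is_derive c s (- k s * a s)) ->
  a L = involute_t k (a 0) (c 0) L /\ c L = involute_n k (a 0) (c 0) L.
Proof.
  intros HL Hac.
  set (u := fun s => a s - involute_t k (a 0) (c 0) s).
  set (v := fun s => c s - involute_n k (a 0) (c 0) s).
  assert (Hnorm : u 0 * u 0 + v 0 * v 0 = u L * u L + v L * v L).
  { apply (eq_is_derive (fun s => u s * u s + v s * v s)); auto.
    intros s Hs; destruct (Hac s Hs) as [Da Dc].
    destruct (involute_ode (a 0) (c 0) s) as [Dt Dn].
    assert (Du : is_derive u s (k s * v s)).
    { eapply is_derive_eq; [apply is_derive_Rminus; eauto|]; unfold v; ring. }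
    assert (Dv : is_derive v s (- k s * u s)).
    { eapply is_derive_eq; [apply is_derive_Rminus; eauto|]; unfold u; ring. }
    eapply is_derive_eq; [apply is_derive_Rplus; apply is_derive_Rmult; eauto|].
    unfold zero; simpl; ring. }
  destruct (involute_at_0 (a 0) (c 0)) as [Ht0 Hn0].
  assert (H0 : u 0 = 0 /\ v 0 = 0) by (unfold u, v; rewrite Ht0, Hn0; split; ring).
  destruct H0 as [Hu0 Hv0]; rewrite Hu0, Hv0 in Hnorm.
  assert (u L = 0 /\ v L = 0) as [HuL HvL] by (split; nra).
  unfold u, v in HuL, HvL; split; lra.
Qed.

End Involute_equation.

Lemma periodic_derive_eq (f : R -> R) (P x d d' : R) :
  (forall u, f (u + P) = f u) -> is_derive f x d -> is_derive f (x + P) d' -> d = d'.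
Proof.
  intros Hper Hd Hd'.
  apply (is_derive_unique f x) in Hd; rewrite <- Hd; apply is_derive_unique.
  apply is_derive_ext with (fun u => f (u + P)); auto.
  eapply is_derive_eq; [apply is_derive_Rcomp; [exact Hd'|]|].
  - apply is_derive_Rplus; [apply (is_derive_id x) | apply (is_derive_const P)].
  - unfold one, zero; simpl; ring.
Qed.

Lemma frame_coords (o u v : V3) (a b : R) :
  dot u u = 1 -> dot v v = 1 -> dot u v = 0 ->
  dot (vsub (vadd o (vadd (vscal a u) (vscal b v))) o) u = a /\
  dot (vsub (vadd o (vadd (vscal a u) (vscal b v))) o) v = b.
Proof.
  intros Huu Hvv Huv; split.
  - transitivity (a * dot u u + b * dot u v); [v3_ring | rewrite Huu, Huv; ring].
  - transitivity (a * dot u v + b * dot v v); [v3_ring | rewrite Hvv, Huv; ring].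
Qed.

Section Frenet_frame.
Variables (e t n b : R -> V3) (k tau : R -> R).
Hypotheses
  (e_deriv : forall s, vderiv e s (t s))
  (t_deriv : forall s, vderiv t s (vscal (k s) (n s)))
  (n_deriv : forall s, vderiv n s (vadd (vscal (- k s) (t s)) (vscal (tau s) (b s))))
  (t_unit : forall s, dot (t s) (t s) = 1)
  (n_unit : forall s, dot (n s) (n s) = 1)
  (t_perp_n : forall s, dot (t s) (n s) = 0)
  (b_cross : forall s, b s = cross (t s) (n s))
  (k_pos : forall s, 0 < k s).

Lemma k_sq_coord s :
  k s * k s = (k s * coord 0 (n s)) * (k s * coord 0 (n s))
            + (k s * coord 1 (n s)) * (k s * coord 1 (n s))
            + (k s * coord 2 (n s)) * (k s * coord 2 (n s)).
Proof. rewrite <- (Rmult_1_r (k s * k s)), <- (n_unit s); v3_ring. Qed.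

Lemma is_derive_coord_t i s : is_derive (fun u => coord i (t u)) s (k s * coord i (n s)).
Proof. rewrite <- coord_vscal; apply vderiv_coord, t_deriv. Qed.

Section Smoothness.
Hypothesis e_smooth : vsmooth e.

Lemma Cinf_t i : Cinf (fun u => coord i (t u)).
Proof.
  apply Cinf_derive with (fun u => coord i (e u)); [apply vsmooth_coord, e_smooth|].
  intros s; apply vderiv_coord, e_deriv.
Qed.

Lemma Cinf_kn i : Cinf (fun u => k u * coord i (n u)).
Proof. apply Cinf_derive with (fun u => coord i (t u)); [apply Cinf_t | apply is_derive_coord_t]. Qed.

(* [k = |t'|]. *)
Lemma Cinf_k : Cinf k.
Proof.
  assert (Hk2 : Cinf (fun u => k u * k u)).
  { apply Cinf_ext with (fun u => (k u * coord 0 (n u)) * (k u * coord 0 (n u))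
        + (k u * coord 1 (n u)) * (k u * coord 1 (n u))
        + (k u * coord 2 (n u)) * (k u * coord 2 (n u))).
    - intros u; symmetry; apply k_sq_coord.
    - repeat apply Cinf_plus; apply Cinf_mult; apply Cinf_kn. }
  apply Cinf_ext with (fun u => sqrt (k u * k u)).
  - intros u; apply sqrt_square, Rlt_le, k_pos.
  - apply Cinf_sqrt; [exact Hk2 | intros u; pose proof (k_pos u); nra].
Qed.

Lemma Cinf_n i : Cinf (fun u => coord i (n u)).
Proof.
  apply Cinf_ext with (fun u => (k u * coord i (n u)) * / k u).
  - intros u; pose proof (k_pos u); field; lra.
  - apply Cinf_mult; [apply Cinf_kn | apply Cinf_inv; [apply Cinf_k | apply k_pos]].
Qed.

End Smoothness.

Lemma involute_frame_ode xi s lam :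
  in_osc e t n s (xi s) -> vderiv xi s (vscal lam (b s)) ->
  is_derive (fun u => dot (vsub (xi u) (e u)) (t u)) s
    (k s * dot (vsub (xi s) (e s)) (n s) - 1) /\
  is_derive (fun u => dot (vsub (xi u) (e u)) (n u)) s
    (- k s * dot (vsub (xi s) (e s)) (t s)).
Proof.
  intros [a [c Hxs]] Hxi.
  assert (Hd := vderiv_vsub _ _ _ _ _ Hxi (e_deriv s)).
  assert (b_perp_t : dot (b s) (t s) = 0) by (rewrite b_cross; v3_ring).
  assert (b_perp_n : dot (b s) (n s) = 0) by (rewrite b_cross; v3_ring).
  assert (b_perp_x : dot (vsub (xi s) (e s)) (b s) = 0) by (rewrite Hxs, b_cross; v3_ring).
  split.
  - eapply is_derive_eq; [apply is_derive_dot; eauto|].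
    transitivity (lam * dot (b s) (t s) - dot (t s) (t s)
                  + k s * dot (vsub (xi s) (e s)) (n s)); [v3_ring|].
    rewrite b_perp_t, t_unit; ring.
  - eapply is_derive_eq; [apply is_derive_dot; eauto|].
    transitivity (lam * dot (b s) (n s) - dot (t s) (n s)
                  - k s * dot (vsub (xi s) (e s)) (t s)
                  + tau s * dot (vsub (xi s) (e s)) (b s)); [v3_ring|].
    rewrite b_perp_n, t_perp_n, b_perp_x; ring.
Qed.

Lemma frame_curve_deriv (a c : R -> R) (s : R) :
  is_derive a s (k s * c s - 1) -> is_derive c s (- k s * a s) ->
  vderiv (fun u => vadd (e u) (vadd (vscal (a u) (t u)) (vscal (c u) (n u)))) s
    (vscal (c s * tau s) (b s)).
Proof.
  intros Ha Hc.
  eapply vderiv_eq.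
  - apply vderiv_vadd; [apply e_deriv|].
    apply vderiv_vadd; apply vderiv_vscal; eauto.
  - v3_ring.
Qed.

Section Periodicity.
Variable L : R.
Hypothesis e_periodic : forall s, e (s + L) = e s.

Lemma t_periodic s : t (s + L) = t s.
Proof.
  apply V3_eq; intros i; symmetry.
  apply (periodic_derive_eq (fun u => coord i (e u)) L s).
  - intros u; rewrite e_periodic; reflexivity.
  - apply vderiv_coord, e_deriv.
  - apply vderiv_coord, e_deriv.
Qed.

Lemma kn_periodic i s : k (s + L) * coord i (n (s + L)) = k s * coord i (n s).
Proof.
  symmetry; apply (periodic_derive_eq (fun u => coord i (t u)) L s).
  - intros u; rewrite t_periodic; reflexivity.
  - apply is_derive_coord_t.
  - apply is_derive_coord_t.
Qed.

Lemma k_periodic s : k (s + L) = k s.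
Proof.
  assert (Hsq : k (s + L) * k (s + L) = k s * k s).
  { rewrite !k_sq_coord, !kn_periodic; reflexivity. }
  pose proof (k_pos s); pose proof (k_pos (s + L)); nra.
Qed.

Lemma n_periodic s : n (s + L) = n s.
Proof.
  apply V3_eq; intros i.
  apply Rmult_eq_reg_l with (k s); [|apply Rgt_not_eq, k_pos].
  rewrite <- (k_periodic s) at 1; apply kn_periodic.
Qed.

Lemma frame_at_period : e L = e 0 /\ t L = t 0 /\ n L = n 0.
Proof.
  rewrite <- (Rplus_0_l L), e_periodic, t_periodic, n_periodic; auto.
Qed.

End Periodicity.

Definition frame_involute (a0 b0 s : R) : V3 :=
  vadd (e s) (vadd (vscal (involute_t k a0 b0 s) (t s)) (vscal (involute_n k a0 b0 s) (n s))).

Section Involutes.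
Variable L : R.
Hypothesis e_smooth : vsmooth e.

Lemma is_involute_frame_involute a0 b0 :
  is_involute L e t n b (vadd (e 0) (vadd (vscal a0 (t 0)) (vscal b0 (n 0))))
    (frame_involute a0 b0).
Proof.
  pose proof (Cinf_k e_smooth) as Hk.
  destruct (Cinf_involute k Hk a0 b0) as [Ht Hn].
  destruct (involute_at_0 k a0 b0) as [Ht0 Hn0].
  split; [|split].
  - apply vsmooth_coord; intros i.
    apply Cinf_ext with (fun u => coord i (e u)
        + (involute_t k a0 b0 u * coord i (t u) + involute_n k a0 b0 u * coord i (n u))).
    + intros u; unfold frame_involute; rewrite !coord_vadd, !coord_vscal; reflexivity.
    + apply Cinf_plus; [apply vsmooth_coord, e_smooth|].
      apply Cinf_plus; apply Cinf_mult; auto using Cinf_t, Cinf_n.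
  - unfold frame_involute; rewrite Ht0, Hn0; reflexivity.
  - intros s _; split; [do 2 eexists; reflexivity|].
    eexists; eexists; split; [|reflexivity].
    apply frame_curve_deriv; apply involute_ode, Hk.
Qed.

Lemma involute_endpoint a0 b0 xi :
  0 < L ->
  is_involute L e t n b (vadd (e 0) (vadd (vscal a0 (t 0)) (vscal b0 (n 0)))) xi ->
  xi L = frame_involute a0 b0 L.
Proof.
  intros HL (_ & Hxi0 & Hxi).
  set (a := fun s => dot (vsub (xi s) (e s)) (t s)).
  set (c := fun s => dot (vsub (xi s) (e s)) (n s)).
  assert (Hac0 : a 0 = a0 /\ c 0 = b0) by (unfold a, c; rewrite Hxi0; apply frame_coords; auto).
  destruct (involute_ode_unique k (Cinf_k e_smooth) L a c HL) as [HaL HcL].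
  { intros s Hs; destruct (Hxi s Hs) as [Hosc (lam & d & Hd & ->)].
    apply (involute_frame_ode xi s lam); auto. }
  destruct (Hxi L (conj (Rlt_le _ _ HL) (Rle_refl L))) as [[aL [cL HxL]] _].
  assert (HacL : a L = aL /\ c L = cL) by (unfold a, c; rewrite HxL; apply frame_coords; auto).
  destruct Hac0 as [Ha0 Hc0]; destruct HacL as [HaL' HcL'].
  rewrite Ha0, Hc0, HaL' in HaL; rewrite Ha0, Hc0, HcL' in HcL.
  rewrite HxL; unfold frame_involute; rewrite <- HaL, <- HcL; reflexivity.
Qed.

End Involutes.

End Frenet_frame.

Theorem mainTheorem8 (L : R) (e : R -> V3) (k tau : R -> R) (t n b : R -> V3) :
  frenet_closed_curve L e k tau t n b ->
  exists c : V3,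
    in_osc e t n 0 c /\
    forall p : V3, in_osc e t n 0 p ->
      (exists xi : R -> V3, is_involute L e t n b p xi) /\
      (forall xi : R -> V3, is_involute L e t n b p xi ->
         xi L = vadd c (rot (RInt k 0 L) (t 0) (n 0) (vsub p (e 0)))).
Proof.
  intros (L_pos & e_smooth & e_periodic & e_deriv & t_unit & n_unit & t_perp_n & b_cross
          & k_pos & _ & t_deriv & n_deriv & _).
  destruct (frame_at_period e t n k e_deriv t_deriv n_unit k_pos L e_periodic) as (eL & tL & nL).
  exists (vadd (e 0) (vadd (vscal (involute_t k 0 0 L) (t 0)) (vscal (involute_n k 0 0 L) (n 0)))).
  split; [do 2 eexists; reflexivity|].
  intros p [a0 [b0 ->]]; split.
  - eexists; eapply is_involute_frame_involute; eauto.
  - intros xi Hxi.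
    erewrite involute_endpoint; eauto.
    unfold frame_involute, rot; rewrite eL, tL, nL.
    destruct (frame_coords (e 0) (t 0) (n 0) a0 b0) as [-> ->]; auto.
    unfold involute_t, involute_n, angle; v3_ring.
Qed.
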